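(* Let $K\subset\mathbb{R}^{2d}\setminus D_0$ be compact. Then there exist $\sqrt2<r<r'$, constants $c_1,c_2,\epsilon>0$ and a function $R\in C_0^\infty(\mathbb{R}^{2d})$ vanishing in a neighbourhood of $D_0$ such that, as symmetric $2d\times 2d$ matrices, $$\nabla^2R(\tilde x)\ge c_1 1_K(\tilde x)-c_2 1_{C_{r,r'}\setminus D_\epsilon}(\tilde x)\quad\text{for all }\tilde x\in\mathbb{R}^{2d}.$$
   Context: $\tilde x=(x_1,x_2)\in\mathbb{R}^{2d}$ with $x_i\in\mathbb{R}^d$; $D_\epsilon=\{\tilde x:|x_1-x_2|\le\epsilon\}$ (so $D_0$ is the diagonal); $C_{r,r'}=\{\tilde x:r\le|\tilde x|\le r'\}$; $\nabla^2R$ is the Hessian, and the scalars on the right are multiples of the identity matrix. *)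

From HB Require Import structures.
From mathcomp Require Import all_boot all_order all_algebra.
From mathcomp Require Import all_classical all_reals all_analysis.
Set Implicit Arguments. Unset Strict Implicit. Unset Printing Implicit Defensive.
Import Order.TTheory GRing.Theory Num.Theory.
Import numFieldNormedType.Exports.
Local Open Scope classical_set_scope.
Local Open Scope ring_scope.

(* Points of R^n are row vectors 'rV[R]_n; R^{2d} is 'rV[R]_(d + d),
   with x = (x1, x2), x1 = lsubmx x, x2 = rsubmx x. *)

Definition enorm {R : realType} {n : nat} (v : 'rV[R]_n) : R :=
  Num.sqrt (\sum_(i < n) v ord0 i ^+ 2).

Definition ebasis {R : realType} {n : nat} (i : 'I_n) : 'rV[R]_n := delta_mx ord0 i.

Fixpoint pderivs {R : realType} {n : nat} (f : 'rV[R]_n -> R) (s : seq 'I_n)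
  : 'rV[R]_n -> R :=
  match s with
  | [::] => f
  | i :: s' => fun x => derive (pderivs f s') x (ebasis i)
  end.

Definition smooth {R : realType} {n : nat} (f : 'rV[R]_n -> R) : Prop :=
  forall s : seq 'I_n,
    continuous (pderivs f s) /\
    forall (i : 'I_n) (x : 'rV[R]_n), derivable (pderivs f s) x (ebasis i).

Definition compact_support {R : realType} {n : nat} (f : 'rV[R]_n -> R) : Prop :=
  exists M : R, forall x, M < enorm x -> f x = 0.

Definition hessian {R : realType} {n : nat} (f : 'rV[R]_n -> R) (x : 'rV[R]_n)
  : 'M[R]_n := \matrix_(i, j) pderivs f [:: i; j] x.

Definition psd_ge {R : realType} {n : nat} (A B : 'M[R]_n) : Prop :=
  forall v : 'rV[R]_n, 0 <= (v *m (A - B) *m v^T) ord0 ord0.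

Definition Dset {R : realType} (d : nat) (eps : R) : set 'rV[R]_(d + d) :=
  [set x | enorm (lsubmx x - rsubmx x) <= eps].

Definition Cann {R : realType} (d : nat) (r r' : R) : set 'rV[R]_(d + d) :=
  [set x | r <= enorm x <= r'].

Arguments Dset {R} d eps.
Arguments Cann {R} d r r'.

(* Write X = |x|^2, Y = |x1 - x2|^2 and phi(t) = exp(-1/t) for t > 0, phi(t) = 0 otherwise.
   The function is F = phi(ka (Y - de)) (1 + la X) chi(X), where the smooth cutoff
   chi = phi(r'^2 - X) / (phi(r'^2 - X) + phi(X - r^2)) is 1 for X <= r^2 and 0 for X >= r'^2.
   F vanishes where Y < de and where X > r'^2.  For X < r^2 the quadratic form of the Hessian
   along w is phi''(T) (D_w T)^2 P + phi'(T) D_w^2 T P + 2 phi'(T) D_w T D_w P + phi(T) D_w^2 P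
   with T = ka (Y - de), P = 1 + la X; once T <= 1/4 and la X <= 1/8 the cross term is absorbed
   by the first and last terms (a quadratic in D_w T with negative discriminant), leaving
   la phi(T) |w|^2, which is bounded below on K since Y >= 2 de there.  The only other place
   where the Hessian is nonzero is the annulus r <= |x| <= r' off {Y < de}, where it is
   merely bounded, by continuity on a compact set. *)

From HB Require Import structures.
From mathcomp Require Import all_boot all_order all_algebra.
From mathcomp Require Import all_classical all_reals all_analysis.
From mathcomp Require Import ring lra.
Set Implicit Arguments. Unset Strict Implicit. Unset Printing Implicit Defensive.
Import Order.TTheory GRing.Theory Num.Theory.
Import numFieldNormedType.Exports.
Local Open Scope classical_set_scope.
Local Open Scope ring_scope.

Section ExpInv.
Variable R : realType.
Implicit Types (t : R) (m : nat).

Definition expinv m t : R := if 0 < t then expR (- t^-1) * t^-1 ^+ m else 0.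

Lemma expinv_le0 m t : t <= 0 -> expinv m t = 0.
Proof. by rewrite /expinv ltNge => ->. Qed.

Lemma expinvE m t : 0 < t -> expinv m t = expR (- t^-1) * t^-1 ^+ m.
Proof. by rewrite /expinv => ->. Qed.

Lemma expinv_gt0 m t : 0 < t -> 0 < expinv m t.
Proof. by move=> t0; rewrite expinvE // mulr_gt0 ?expR_gt0 // exprn_gt0 ?invr_gt0. Qed.

Lemma expinv_ge0 m t : 0 <= expinv m t.
Proof. by have [/expinv_le0 ->|/(expinv_gt0 m)/ltW] := leP t 0. Qed.

Lemma expinv_le_linear m t : 0 <= t -> expinv m t <= (m.+1)`!%:R * t.
Proof.
rewrite le0r => /predU1P[->|t0]; first by rewrite expinv_le0 ?mulr0.
rewrite expinvE // -[X in _ <= _ * X]invrK; set u := t^-1.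
have u0 : 0 < u by rewrite invr_gt0.
have fact0 : 0 < (m.+1)`!%:R :> R by rewrite ltr0n fact_gt0.
have exp_ge : u ^+ m.+1 <= (m.+1)`!%:R * expR u.
  rewrite mulrC -ler_pdivrMr //; apply: le_trans (expR_ge1Dxn m (ltW u0)).
  by rewrite lerDr.
have eu := expR_gt0 u.
have -> : expR (- u) * u ^+ m = u ^+ m.+1 / (expR u * u).
  by rewrite expRN exprS invfM; field; rewrite ?gt_eqF.
have -> : (m.+1)`!%:R * u^-1 = (m.+1)`!%:R * expR u / (expR u * u).
  by field; rewrite ?gt_eqF.
by rewrite ler_pM2r // invr_gt0 mulr_gt0.
Qed.

Lemma expinv_cvg0 m : expinv m x @[x --> (0:R)] --> 0.
Proof.
have fact0 : 0 < (m.+1)`!%:R :> R by rewrite ltr0n fact_gt0.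
apply/cvgrPdist_lt => e e0; near=> x.
rewrite sub0r normrN ger0_norm ?expinv_ge0 //.
have [x0|x0] := leP x 0; first by rewrite expinv_le0.
apply: le_lt_trans (expinv_le_linear m (ltW x0)) _.
rewrite mulrC -ltr_pdivlMr //; apply: le_lt_trans (ler_norm x) _; near: x.
exists (e / (m.+1)`!%:R); first exact: divr_gt0.
by move=> y /=; rewrite sub0r normrN.
Unshelve. all: by end_near. Qed.

Lemma is_derive_inv t : t != 0 -> is_derive t 1 GRing.inv (- t ^- 2).
Proof. by move=> t0; have := is_deriveV t0 (is_derive_id t 1); rewrite /= scaler1. Qed.

Lemma is_derive_expinv m t :
  is_derive t 1 (expinv m) (expinv m.+2 t - m%:R * expinv m.+1 t).
Proof.
have [t0|t0|->] := ltgtP t 0.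
- rewrite !expinv_le0 ?ltW // mulr0 subr0.
  apply: (@near_eq_is_derive _ _ _ (cst 0)); near=> y.
  rewrite expinv_le0 //; apply: ltW; near: y; exact: lt_nbhsl.
- have tn0 : t != 0 by rewrite gt_eqF.
  pose g := fun y : R => expR (- y^-1) * y^-1 ^+ m.
  apply: (@near_eq_is_derive _ _ _ g).
    near=> y; rewrite expinvE //; near: y; exact: lt_nbhsr.
  have dinv := is_derive_inv tn0.
  have dexp : is_derive t 1 (fun y => expR (- y^-1)) (expR (- t^-1) * t ^- 2).
    have dopp : is_derive t 1 (fun y : R => - y^-1) (t ^- 2).
      by have := is_deriveN dinv; rewrite opprK.
    exact: is_derive1_comp (is_derive_expR _) dopp.
  have := is_deriveM dexp (is_deriveX m dinv); rewrite exprfctE mulrfctE => H.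
  apply: is_derive_eq; rewrite !expinvE //= /GRing.scale /=.
  by case: m {H g} => [|m]; rewrite /= ?expr0 !exprS ?expr0; field.
- rewrite !expinv_le0 // mulr0 subr0.
  have quot : (fun h : R => h^-1 *: ((expinv m \o shift 0) (h *: 1) - expinv m 0))
      = expinv m.+1.
    apply/funext => h /=; rewrite [expinv m 0]expinv_le0 // subr0 /GRing.scale /= mulr1 addr0.
    rewrite /expinv; case: ifP; rewrite ?mulr0 // => _.
    by rewrite exprS mulrCA mulrA.
  have lim0 : expinv m.+1 @ 0^' --> (0:R) by exact: cvg_within_filter (expinv_cvg0 _).
  apply: DeriveDef; first by rewrite /derivable quot; apply/cvg_ex; exists 0.
  by rewrite /derive quot; apply: cvg_lim.
Unshelve. all: by end_near. Qed.

Lemma continuous_expinv m : continuous (expinv m).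
Proof.
move=> t; apply: differentiable_continuous; apply/derivable1_diffP.
exact: (@ex_derive _ _ _ _ _ _ _ (is_derive_expinv m t)).
Qed.

Lemma ler_expinv0 s t : 0 < s -> s <= t -> expinv 0 s <= expinv 0 t.
Proof.
move=> s0 st; have t0 := lt_le_trans s0 st.
by rewrite !expinvE // !expr0 !mulr1 ler_expR lerN2 lef_pV2 ?posrE.
Qed.

End ExpInv.

Section DirectionalDerivative.
Variables (R : realType) (V : normedModType R).
Implicit Types (f : V -> R) (x v : V).

Lemma derive_along_line f x v : 'D_v f x = 'D_1 (fun h : R => f (h *: v + x)) 0.
Proof.
rewrite /derive; set g1 := fun h => h^-1 *: _; set g2 := fun h => h^-1 *: _.
suff -> : g1 = g2 by [].
by apply/funext => h; rewrite /g1 /g2 /= addr0 scale0r add0r [_%:A]mulr1.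
Qed.

Lemma is_derive_comp f (g : R -> R) x v a b :
  is_derive (f x) 1 g a -> is_derive x v f b -> is_derive x v (g \o f) (a * b).
Proof.
move=> dg [df <-].
pose line := fun h : R => f (h *: v + x).
have line0 : line 0 = f x by rewrite /line scale0r add0r.
have dline : is_derive (0:R) (1:R) line ('D_v f x).
  by apply: DeriveDef; [exact/(derivable1P _ _ _).1 | rewrite derive_along_line].
rewrite -line0 in dg; have dcomp := is_derive1_comp dg dline.
apply: DeriveDef; first by apply/derivable1P; exact: (@ex_derive _ _ _ _ _ _ _ dcomp).
by rewrite derive_along_line; exact: (@derive_val _ _ _ _ _ _ _ dcomp).
Qed.

Lemma is_derive_quadratic_along f x v a c :
  (forall h : R, f (h *: v + x) = f x + h * a + h ^+ 2 * c) -> is_derive x v f a.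
Proof.
move=> fE.
have quot : (fun h : R => h^-1 *: ((f \o shift x) (h *: v) - f x)) @ 0^' --> a.
  have eq_near : {near 0^', (fun h : R => a + h * c) =1
      (fun h : R => h^-1 *: ((f \o shift x) (h *: v) - f x))}.
    near=> h => /=.
    have h0 : h != 0 by near: h; exact: nbhs_dnbhs_neq.
    by rewrite fE /GRing.scale /= expr2; field.
  apply: cvg_trans (near_eq_cvg eq_near) _.
  have lim : (fun h : R => a + h * c) @ (0:R) --> a + 0 * c.
    by apply: cvgD; [exact: cvg_cst | apply: cvgM; [exact: cvg_id | exact: cvg_cst]].
  by rewrite mul0r addr0 in lim; exact: cvg_within_filter lim.
apply: DeriveDef; first by apply/cvg_ex; exists a.
exact: cvg_lim.
Unshelve. all: by end_near. Qed.

End DirectionalDerivative.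

Lemma qform_along (R : comPzRingType) n (A : 'M[R]_n) (x v : 'rV[R]_n) h :
  ((h *: v + x) *m A *m (h *: v + x)^T) 0 0 =
  (x *m A *m x^T) 0 0 + h * (x *m ((A + A^T) *m v^T)) 0 0 + h ^+ 2 * (v *m A *m v^T) 0 0.
Proof.
rewrite -!trace_mx11 linearD linearZ /= !(mulmxDl, mulmxDr) mulmxA.
rewrite -!(scalemxAl, scalemxAr) !(mxtraceD, mxtraceZ).
by rewrite -[\tr (v *m A *m x^T)]mxtrace_tr !trmx_mul trmxK mulmxA; ring.
Qed.

Lemma linear_rowE (R : comPzRingType) n (l : 'rV[R]_n -> R) :
  (forall a u v, l (a *: u + v) = a * l u + l v) ->
  forall w, l w = \sum_i w 0 i * l (delta_mx 0 i).
Proof.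
move=> lin w; have l0 : l 0 = 0.
  have := lin 1 0 0; rewrite scaler0 addr0 mul1r => /(congr1 (fun y => y - l 0)).
  by rewrite subrr addrK.
rewrite {1}[w]row_sum_delta; elim/big_rec2: _ => [//|i y1 y2 _ <-].
by rewrite lin.
Qed.

Section Loewner.
Variables (R : realType) (n : nat).
Implicit Types (A : 'M[R]_n) (v : 'rV[R]_n) (a b : R).

Lemma sqnormE v : (v *m v^T) 0 0 = \sum_i v 0 i ^+ 2.
Proof. by rewrite mxE; apply: eq_bigr => i _; rewrite mxE expr2. Qed.

Lemma sqnorm_ge0 v : 0 <= (v *m v^T) 0 0.
Proof. by rewrite sqnormE; apply: sumr_ge0 => i _; rewrite sqr_ge0. Qed.

Lemma psd_ge_scalarE A a v :
  (v *m (A - a%:M) *m v^T) 0 0 = (v *m A *m v^T) 0 0 - a * (v *m v^T) 0 0.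
Proof.
rewrite -trace_mx11 mulmxBr mulmxBl mul_mx_scalar -scalemxAl.
by rewrite linearB linearZ /= !trace_mx11.
Qed.

Lemma psd_ge_scalar A a :
  (forall v, a * (v *m v^T) 0 0 <= (v *m A *m v^T) 0 0) -> psd_ge A a%:M.
Proof. by move=> Aa v; rewrite psd_ge_scalarE subr_ge0. Qed.

Lemma psd_ge_scalarW A a b : b <= a -> psd_ge A a%:M -> psd_ge A b%:M.
Proof.
move=> ba Aa; apply: psd_ge_scalar => v; have := Aa v; rewrite psd_ge_scalarE subr_ge0.
exact/le_trans/ler_wpM2r/ba/sqnorm_ge0.
Qed.

Lemma psd_ge0_scalar a : a <= 0 -> psd_ge (0 : 'M[R]_n) a%:M.
Proof.
move=> a0; apply: psd_ge_scalar => v; rewrite mulmx0 mul0mx [X in _ <= X]mxE.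
by rewrite mulr_le0_ge0 ?sqnorm_ge0.
Qed.

Lemma psd_ge_entry_bound A (L : R) :
  (forall i j, `|A i j| <= L) -> psd_ge A (- (L * n%:R))%:M.
Proof.
move=> AL; apply: psd_ge_scalar => v.
have term i j : - (L / 2 * (v 0 i ^+ 2 + v 0 j ^+ 2)) <= v 0 i * A i j * v 0 j.
  have /andP[lo hi] : - L <= A i j <= L by rewrite -ler_norml.
  have -> : v 0 i * A i j * v 0 j = (L + A i j) * (v 0 i + v 0 j) ^+ 2 / 4
      + (L - A i j) * (v 0 i - v 0 j) ^+ 2 / 4 - L / 2 * (v 0 i ^+ 2 + v 0 j ^+ 2).
    by field.
  have h1 : 0 <= (L + A i j) * (v 0 i + v 0 j) ^+ 2 / 4.
    by apply: divr_ge0; [apply: mulr_ge0; [lra|exact: sqr_ge0]|lra].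
  have h2 : 0 <= (L - A i j) * (v 0 i - v 0 j) ^+ 2 / 4.
    by apply: divr_ge0; [apply: mulr_ge0; [lra|exact: sqr_ge0]|lra].
  lra.
have qE : (v *m A *m v^T) 0 0 = \sum_j \sum_i v 0 i * A i j * v 0 j.
  by rewrite mxE; apply: eq_bigr => j _; rewrite !mxE mulr_suml.
rewrite qE sqnormE; apply: le_trans (ler_sum _ (fun j _ => ler_sum _ (fun i _ => term i j))).
set S := \sum_i v 0 i ^+ 2.
have inner j : \sum_i - (L / 2 * (v 0 i ^+ 2 + v 0 j ^+ 2)) = - (L / 2) * (S + n%:R * v 0 j ^+ 2).
  under eq_bigr do rewrite -mulNr.
  by rewrite -mulr_sumr big_split /= sumr_const card_ord -[_ *+ n]mulr_natl.
rewrite (eq_bigr _ (fun j _ => inner j)) -mulr_sumr big_split /= sumr_const card_ord.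
rewrite -mulr_sumr -/S.
suff -> : - (L / 2) * (S *+ n + n%:R * S) = - (L * n%:R) * S by [].
by rewrite -mulr_natl; field.
Qed.

End Loewner.

Lemma enormE (R : realType) n (v : 'rV[R]_n) : enorm v = Num.sqrt ((v *m v^T) 0 0).
Proof. by rewrite sqnormE. Qed.

Lemma normr_coord_le (R : realType) n (v : 'rV[R]_n) i : `|v 0 i| <= Num.sqrt ((v *m v^T) 0 0).
Proof.
rewrite -sqrtr_sqr ler_sqrt ?sqnorm_ge0 // sqnormE (bigD1 i) //= lerDl.
by apply: sumr_ge0 => j _; rewrite sqr_ge0.
Qed.

Lemma quadratic_ge0 (R : realFieldType) (a b c x : R) :
  0 < a -> b ^+ 2 <= 4 * a * c -> 0 <= a * x ^+ 2 + b * x + c.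
Proof.
move=> a0 disc; have : 0 <= 4 * a * (a * x ^+ 2 + b * x + c).
  have -> : 4 * a * (a * x ^+ 2 + b * x + c) = (2 * a * x + b) ^+ 2 + (4 * a * c - b ^+ 2).
    by ring.
  by rewrite addr_ge0 ?sqr_ge0 // subr_ge0.
by rewrite pmulr_rge0 // mulr_gt0.
Qed.

Lemma cauchy_schwarz_rV (R : realFieldType) n (w x : 'rV[R]_n) :
  ((w *m x^T) 0 0) ^+ 2 <= (x *m x^T) 0 0 * (w *m w^T) 0 0.
Proof.
have dotE (u v : 'rV[R]_n) : (u *m v^T) 0 0 = \sum_i u 0 i * v 0 i.
  by rewrite mxE; apply: eq_bigr => i _; rewrite mxE.
pose X := \sum_i x 0 i * x 0 i; pose W := \sum_i w 0 i * w 0 i.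
pose B := \sum_i w 0 i * x 0 i.
rewrite !dotE -/X -/W -/B.
have prodE (f g : 'I_n -> R) : \sum_i \sum_j f i * g j = (\sum_i f i) * (\sum_j g j).
  by rewrite mulr_suml; apply: eq_bigr => i _; rewrite mulr_sumr.
(* Lagrange's identity *)
have : \sum_i \sum_j (w 0 i * x 0 j - w 0 j * x 0 i) ^+ 2 = 2 * (X * W - B ^+ 2).
  transitivity (\sum_i \sum_j ((x 0 i * x 0 i) * (w 0 j * w 0 j)
      + (w 0 i * w 0 i) * (x 0 j * x 0 j) - (2 * (w 0 i * x 0 i)) * (w 0 j * x 0 j))).
    by apply: eq_bigr => i _; apply: eq_bigr => j _; ring.
  under eq_bigr do rewrite sumrB big_split /=.
  by rewrite sumrB big_split /= !prodE -mulr_sumr -/X -/W -/B expr2; ring.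
have : 0 <= \sum_i \sum_j (w 0 i * x 0 j - w 0 j * x 0 i) ^+ 2.
  by do 2!(apply: sumr_ge0 => ? _); exact: sqr_ge0.
by move=> /[swap] ->; rewrite pmulr_rge0 // subr_ge0.
Qed.

Lemma expinv_profile_estimate (R : realType) (t al Yw P be X W ka la : R) :
  0 < la -> 0 <= ka -> t <= 1 / 4 -> 4 * la * X <= 1 / 2 -> 1 <= P -> 0 <= Yw ->
  0 <= W -> be ^+ 2 <= X * W ->
  la * expinv 0 t * W <=
    (expinv 4 t - 2 * expinv 3 t) * al ^+ 2 * P
  + expinv 2 t * (ka * (2 * Yw)) * P
  + 2 * expinv 2 t * al * (la * (2 * be))
  + expinv 0 t * (la * (2 * W)).
Proof.
move=> la0 ka0 t_le la_le P1 Yw0 W0 cs.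
have [t0|t0] := leP t 0; first by rewrite !expinv_le0 //; lra.
rewrite !expinvE // !expr0 !mulr1; set u := t^-1; set e := expR (- u).
have u4 : 4 <= u by rewrite -[4]invrK lef_pV2 ?posrE //; lra.
have e0 : 0 < e := expR_gt0 _.
pose g := e * u ^+ 3 * (u - 2).
have g0 : 0 < g by rewrite !mulr_gt0 ?exprn_gt0 //; lra.
have quad : 0 <= g * al ^+ 2 + (4 * la * (e * u ^+ 2) * be) * al + la * e * W.
  apply: quadratic_ge0 => //.
  have scale : 4 * la * u * be ^+ 2 <= (u - 2) * W.
    have LXu : 4 * la * X * u <= u - 2 by have := ler_wpM2r (ltW (lt_le_trans _ u4)) la_le; lra.
    apply: le_trans (_ : (4 * la * X * u) * W <= _); last exact: ler_wpM2r.
    have -> : 4 * la * X * u * W = 4 * la * u * (X * W) by ring.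
    by apply: ler_wpM2l => //; rewrite !mulr_ge0 //; lra.
  have -> : (4 * la * (e * u ^+ 2) * be) ^+ 2 = (4 * la * e ^+ 2 * u ^+ 3) * (4 * la * u * be ^+ 2).
    by ring.
  have -> : 4 * g * (la * e * W) = (4 * la * e ^+ 2 * u ^+ 3) * ((u - 2) * W) by rewrite /g; ring.
  by apply: ler_wpM2l => //; rewrite !mulr_ge0 ?exprn_ge0 //; lra.
have rest : 0 <= (P - 1) * (g * al ^+ 2) + e * u ^+ 2 * (ka * (2 * Yw)) * P.
  apply: addr_ge0; apply: mulr_ge0; try lra.
    by rewrite mulr_ge0 ?sqr_ge0 // ltW.
  by rewrite !mulr_ge0 ?exprn_ge0 //; lra.
have -> : (e * u ^+ 4 - 2 * (e * u ^+ 3)) * al ^+ 2 * P + e * u ^+ 2 * (ka * (2 * Yw)) * P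
    + 2 * (e * u ^+ 2) * al * (la * (2 * be)) + e * (la * (2 * W))
  = la * e * W + ((P - 1) * (g * al ^+ 2) + e * u ^+ 2 * (ka * (2 * Yw)) * P)
    + (g * al ^+ 2 + 4 * la * (e * u ^+ 2) * be * al + la * e * W) by rewrite /g; ring.
by rewrite -addrA lerDl addr_ge0.
Qed.

Lemma continuous_sum (R : numFieldType) (T : topologicalType) (I : Type) (r : seq I)
    (f : I -> T -> R) :
  (forall i, continuous (f i)) -> continuous (fun x => \sum_(i <- r) f i x).
Proof.
move=> cf; elim: r => [|i r IH].
  have -> : (fun x => \sum_(i <- [::]) f i x) = cst 0 by apply/funext => x; rewrite big_nil.
  exact: cst_continuous.
have -> : (fun x => \sum_(j <- i :: r) f j x) = f i + (fun x => \sum_(j <- r) f j x).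
  by apply/funext => x; rewrite big_cons.
by move=> x; apply: continuousD; [exact: cf|exact: IH].
Qed.

Lemma compact_bounded_above (R : realType) (T : topologicalType) (K : set T) (f : T -> R) :
  compact K -> continuous f -> exists M, forall x, K x -> f x <= M.
Proof.
move=> cK cf; have [K0|K0] := pselect (K !=set0); last first.
  by exists 0 => x Kx; exfalso; apply: K0; exists x.
have [c _ fc] := compact_EVT_max K0 cK (continuous_subspaceT cf).
by exists (f c) => x Kx; apply: fc; rewrite inE.
Qed.

Lemma compact_pos_bounded_below (R : realType) (T : topologicalType) (K : set T) (f : T -> R) :
  compact K -> continuous f -> (forall x, K x -> 0 < f x) ->
  exists2 m, 0 < m & forall x, K x -> m <= f x.
Proof.
move=> cK cf fK; have [K0|K0] := pselect (K !=set0); last first.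
  by exists 1 => // x Kx; exfalso; apply: K0; exists x.
have [c Kc fc] := compact_EVT_min K0 cK (continuous_subspaceT cf).
by exists (f c) => [|x Kx]; [exact/fK/set_mem | apply: fc; rewrite inE].
Qed.

Lemma continuous_bounded_closed_ball (R : realType) n (f : 'rV[R]_n -> R) (c : R) :
  continuous f -> exists L, forall x, (x *m x^T) 0 0 <= c -> `|f x| <= L.
Proof.
move=> cf; pose s := Num.sqrt c.
pose box := [set v : 'rV[R]_n | forall i, `[- s, s]%classic (v 0 i)].
have cbox : compact box := rV_compact (fun=> @segment_compact _ _ _).
have cnf : continuous (fun x => `|f x|).
  by move=> x; apply: continuous_comp; [exact: cf | exact: norm_continuous].
have [L fL] := compact_bounded_above cbox cnf.
exists L => x xc; apply: fL => i; rewrite /= in_itv /= -ler_norml.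
apply: le_trans (normr_coord_le x i) _.
by rewrite ler_sqrt // (le_trans (sqnorm_ge0 x)).
Qed.

Lemma open_sublevel (R : realType) (T : topologicalType) (f : T -> R) (a : R) :
  continuous f -> open [set x | f x < a].
Proof.
by move=> cf; apply: (@open_comp _ _ f [set z | z < a]) => [x _|]; [exact: cf|exact: open_lt].
Qed.

Lemma open_superlevel (R : realType) (T : topologicalType) (f : T -> R) (a : R) :
  continuous f -> open [set x | a < f x].
Proof.
by move=> cf; apply: (@open_comp _ _ f [set z | a < z]) => [x _|]; [exact: cf|exact: open_gt].
Qed.

Section Expressions.
Variables (R : realType) (n : nat).
Local Notation V := 'rV[R]_n.

(* Smoothness is proved once, by induction, for a syntax of functions closed under
   directional differentiation ([dexpr]). *)
Inductive expr : Type :=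
| ECst of R
| ELin of 'cV[R]_n
| EQuad of 'M[R]_n
| EAdd of expr & expr
| EMul of expr & expr
| EExpinv of nat & expr
| EInv of expr.

Fixpoint sem (e : expr) (x : V) : R :=
  match e with
  | ECst c => c
  | ELin b => (x *m b) 0 0
  | EQuad A => (x *m A *m x^T) 0 0
  | EAdd e1 e2 => sem e1 x + sem e2 x
  | EMul e1 e2 => sem e1 x * sem e2 x
  | EExpinv m e1 => expinv m (sem e1 x)
  | EInv e1 => (sem e1 x)^-1
  end.

Fixpoint dexpr (v : V) (e : expr) : expr :=
  match e with
  | ECst _ => ECst 0
  | ELin b => ECst ((v *m b) 0 0)
  | EQuad A => ELin ((A + A^T) *m v^T)
  | EAdd e1 e2 => EAdd (dexpr v e1) (dexpr v e2)
  | EMul e1 e2 => EAdd (EMul (dexpr v e1) e2) (EMul e1 (dexpr v e2))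
  | EExpinv m e1 =>
      EMul (EAdd (EExpinv m.+2 e1) (EMul (ECst (- m%:R)) (EExpinv m.+1 e1))) (dexpr v e1)
  | EInv e1 => EMul (ECst (-1)) (EMul (dexpr v e1) (EMul (EInv e1) (EInv e1)))
  end.

Fixpoint denoms_nonzero (e : expr) : Prop :=
  match e with
  | EAdd e1 e2 | EMul e1 e2 => denoms_nonzero e1 /\ denoms_nonzero e2
  | EExpinv _ e1 => denoms_nonzero e1
  | EInv e1 => (forall x, sem e1 x != 0) /\ denoms_nonzero e1
  | _ => True
  end.

Implicit Types (e : expr) (u v w x : V).

Lemma denoms_nonzero_dexpr v e : denoms_nonzero e -> denoms_nonzero (dexpr v e).
Proof. by elim: e => //= [e1 IH1 e2 IH2|e1 IH1 e2 IH2|m e1 IH|e1 IH]; tauto. Qed.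

Lemma sem_dexprDZ a u v e x :
  sem (dexpr (a *: u + v) e) x = a * sem (dexpr u e) x + sem (dexpr v e) x.
Proof.
elim: e => /= [c|b|A|e1 IH1 e2 IH2|e1 IH1 e2 IH2|m e1 IH|e1 IH].
- by rewrite mulr0 addr0.
- by rewrite -!trace_mx11 mulmxDl -scalemxAl mxtraceD mxtraceZ.
- rewrite -!trace_mx11 linearD linearZ /= !mulmxDr -!scalemxAr.
  by rewrite mxtraceD mxtraceZ.
- by rewrite IH1 IH2; ring.
- by rewrite IH1 IH2; ring.
- by rewrite IH; ring.
- by rewrite IH; ring.
Qed.

Lemma is_derive_sem e : denoms_nonzero e ->
  forall x v, is_derive x v (sem e) (sem (dexpr v e) x).
Proof.
elim: e => /= [c|b|A|e1 IH1 e2 IH2|e1 IH1 e2 IH2|m e1 IH|e1 IH] wf_e x v.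
- exact: is_derive_cst.
- apply: (@is_derive_quadratic_along _ _ _ _ _ _ 0) => h.
  by rewrite -!trace_mx11 mulmxDl -scalemxAl mxtraceD mxtraceZ mulr0 addr0 addrC.
- exact: (is_derive_quadratic_along (fun h => qform_along A x v h)).
- have := is_deriveD (IH1 wf_e.1 x v) (IH2 wf_e.2 x v); by rewrite addrfctE.
- have := is_deriveM (IH1 wf_e.1 x v) (IH2 wf_e.2 x v); rewrite mulrfctE => H.
  by apply: is_derive_eq; rewrite /GRing.scale /=; ring.
- have := is_derive_comp (is_derive_expinv m (sem e1 x)) (IH wf_e x v) => H.
  by apply: is_derive_eq; ring.
- have := is_derive_comp (is_derive_inv (wf_e.1 x)) (IH wf_e.2 x v) => H.
  by apply: is_derive_eq; field; exact: wf_e.1.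
Qed.


Lemma continuous_sem (e : expr) : denoms_nonzero e -> continuous (sem e).
Proof.
have cont_mulmx m (B : 'M[R]_(n, m)) j : continuous (fun x : V => (x *m B) 0 j).
  have -> : (fun x : V => (x *m B) 0 j) = (fun x => \sum_k x 0 k * B k j).
    by apply/funext => x; rewrite mxE.
  apply: continuous_sum => k x.
  by apply: continuousM; [exact: coord_continuous|exact: cst_continuous].
elim: e => /= [c|b|A|e1 IH1 e2 IH2|e1 IH1 e2 IH2|m e1 IH|e1 IH] wf_e.
- exact: cst_continuous.
- exact: cont_mulmx.
- have -> : (fun x : V => (x *m A *m x^T) 0 0) = (fun x => \sum_j (x *m A) 0 j * x 0 j).
    by apply/funext => x; rewrite mxE; apply: eq_bigr => j _; rewrite [x^T _ _]mxE.
  by apply: continuous_sum => j x; apply: continuousM; [exact: cont_mulmx|exact: coord_continuous].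
- by move=> x; apply: continuousD; [exact: IH1 wf_e.1 x|exact: IH2 wf_e.2 x].
- by move=> x; apply: continuousM; [exact: IH1 wf_e.1 x|exact: IH2 wf_e.2 x].
- by move=> x; apply: continuous_comp; [exact: IH wf_e x|exact: continuous_expinv].
- by move=> x; apply: continuousV; [exact: wf_e.1|exact: IH wf_e.2 x].
Qed.

Lemma sem_dexpr2DZ (e : expr) a u v w x : denoms_nonzero e ->
  sem (dexpr u (dexpr (a *: v + w) e)) x =
  a * sem (dexpr u (dexpr v e)) x + sem (dexpr u (dexpr w e)) x.
Proof.
move=> wf_e; have d1 v' := is_derive_sem (denoms_nonzero_dexpr v' wf_e) x u.
rewrite -(@derive_val _ _ _ _ _ _ _ (d1 (a *: v + w))).
have -> : sem (dexpr (a *: v + w) e) = a \*: sem (dexpr v e) + sem (dexpr w e).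
  by apply/funext => y; rewrite sem_dexprDZ.
by rewrite (@derive_val _ _ _ _ _ _ _ (is_deriveD (is_deriveZ a (d1 v)) (d1 w))).
Qed.

Fixpoint dexprs (s : seq 'I_n) (e : expr) : expr :=
  if s is i :: s' then dexpr (ebasis i) (dexprs s' e) else e.

Lemma denoms_nonzero_dexprs s e : denoms_nonzero e -> denoms_nonzero (dexprs s e).
Proof. by move=> wf_e; elim: s => //= i s IH; exact: denoms_nonzero_dexpr. Qed.

Lemma pderivs_sem e s : denoms_nonzero e -> pderivs (sem e) s = sem (dexprs s e).
Proof.
move=> wf_e; elim: s => //= i s IH; apply/funext => x; rewrite IH.
exact: (@derive_val _ _ _ _ _ _ _ (is_derive_sem (denoms_nonzero_dexprs s wf_e) x _)).
Qed.

Lemma smooth_sem e : denoms_nonzero e -> @smooth R n (sem e).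
Proof.
move=> wf_e s; rewrite pderivs_sem //.
split; first exact: continuous_sem (denoms_nonzero_dexprs s wf_e).
by move=> i x; exact: (@ex_derive _ _ _ _ _ _ _ (is_derive_sem (denoms_nonzero_dexprs s wf_e) x _)).
Qed.

Lemma hessian_qform e x (w : V) : denoms_nonzero e ->
  (w *m hessian (sem e) x *m w^T) 0 0 = sem (dexpr w (dexpr w e)) x.
Proof.
move=> wf_e.
have outer := linear_rowE (fun a u v => sem_dexprDZ a u v (dexpr w e) x).
have inner i := linear_rowE (fun a u v => sem_dexpr2DZ a (ebasis i) u v x wf_e).
rewrite outer mxE; under eq_bigr do rewrite mxE.
under [RHS]eq_bigr do rewrite inner mulr_sumr.
rewrite exchange_big /=; apply: eq_bigr => j _; rewrite mxE mulr_suml.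
by apply: eq_bigr => i _; rewrite mxE pderivs_sem //=; ring.
Qed.

Definition affine (k c : R) e : expr := EAdd (EMul (ECst k) e) (ECst c).

Lemma sem_affine k c e x : sem (affine k c e) x = k * sem e x + c.
Proof. by []. Qed.

Lemma sem_dexpr_affine k c e v x :
  sem (dexpr v (affine k c e)) x = k * sem (dexpr v e) x.
Proof. by rewrite /=; ring. Qed.

Lemma sem_dexpr2_affine k c e u v x :
  sem (dexpr u (dexpr v (affine k c e))) x = k * sem (dexpr u (dexpr v e)) x.
Proof. by rewrite /=; ring. Qed.

Lemma sem_dexpr2_quad (A : 'M[R]_n) w x :
  sem (dexpr w (dexpr w (EQuad A))) x = 2 * sem (EQuad A) w.
Proof.
rewrite /= -!trace_mx11 mulmxDl mulmxDr mxtraceD.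
by rewrite -[\tr (w *m (A^T *m w^T))]mxtrace_tr !trmx_mul !trmxK !mulmxA; ring.
Qed.

Lemma sem_dexpr2_expinv_mul e1 e2 w x :
  let t := sem e1 x in
  sem (dexpr w (dexpr w (EMul (EExpinv 0 e1) e2))) x =
    (expinv 4 t - 2 * expinv 3 t) * sem (dexpr w e1) x ^+ 2 * sem e2 x
  + expinv 2 t * sem (dexpr w (dexpr w e1)) x * sem e2 x
  + 2 * expinv 2 t * sem (dexpr w e1) x * sem (dexpr w e2) x
  + expinv 0 t * sem (dexpr w (dexpr w e2)) x.
Proof. by rewrite /=; ring. Qed.

End Expressions.

Lemma pderivs_local (R : realType) n (f g : 'rV[R]_n -> R) (U : set 'rV[R]_n) :
  open U -> {in U, f =1 g} -> forall s, {in U, pderivs f s =1 pderivs g s}.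
Proof.
move=> oU fg s; elim: s => [|i s IH] y /[dup] /set_mem Uy yU //=; first exact: fg.
apply: near_eq_derive; apply: filterS (open_nbhs_nbhs (conj oU Uy)) => z Uz.
exact/IH/mem_set.
Qed.

Lemma hessian_local (R : realType) n (f g : 'rV[R]_n -> R) (U : set 'rV[R]_n) x :
  open U -> U x -> {in U, f =1 g} -> hessian f x = hessian g x.
Proof.
move=> oU Ux fg; apply/matrixP => i j; rewrite !mxE.
exact: pderivs_local oU fg [:: i; j] x (mem_set Ux).
Qed.

Lemma hessian_cst0 (R : realType) n (x : 'rV[R]_n) : hessian (fun=> 0) x = 0.
Proof.
apply/matrixP => i j; rewrite !mxE.
by rewrite (pderivs_sem (e := ECst n 0) [:: i; j] I).
Qed.

Section DiagonalDistance.
Variables (R : realType) (d : nat).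
Local Notation V := 'rV[R]_(d + d).

Definition sqnorm_expr : expr R (d + d) := EQuad 1%:M.

(* [x *m diag_diff = x1 - x2] *)
Definition diag_diff : 'M[R]_(d + d, d) := col_mx 1%:M (- 1%:M).

Definition sqdist_expr : expr R (d + d) := EQuad (diag_diff *m diag_diff^T).

Lemma sem_sqnorm (x : V) : sem sqnorm_expr x = (x *m x^T) 0 0.
Proof. by rewrite /sqnorm_expr /= mulmx1. Qed.

Lemma sem_sqdist (x : V) :
  sem sqdist_expr x = ((lsubmx x - rsubmx x) *m (lsubmx x - rsubmx x)^T) 0 0.
Proof.
have -> : lsubmx x - rsubmx x = x *m diag_diff.
  by rewrite -{3}[x]hsubmxK mul_row_col mulmx1 mulmxN mulmx1.
by rewrite /sqdist_expr /= trmx_mul !mulmxA.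
Qed.

Lemma sqdist_le (x : V) : sem sqdist_expr x <= 2 * sem sqnorm_expr x.
Proof.
rewrite sem_sqdist sem_sqnorm !sqnormE big_split_ord mulrDr !mulr_sumr -big_split.
apply: ler_sum => j _; rewrite /= !mxE.
by have := sqr_ge0 (x 0 (lshift d j) + x 0 (rshift d j)); lra.
Qed.

Lemma sem_dexpr_sqnorm (w x : V) : sem (dexpr w sqnorm_expr) x = 2 * (x *m w^T) 0 0.
Proof. by rewrite /sqnorm_expr /= trmx1 -!trace_mx11 mulmxDl mul1mx mulmxDr mxtraceD; ring. Qed.

Lemma enorm_sqnorm (x : V) : enorm x = Num.sqrt (sem sqnorm_expr x).
Proof. by rewrite sem_sqnorm enormE. Qed.

Lemma enorm_sqdist (x : V) : enorm (lsubmx x - rsubmx x) = Num.sqrt (sem sqdist_expr x).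
Proof. by rewrite sem_sqdist enormE. Qed.

End DiagonalDistance.

Section Bump.
Variables (R : realType) (d : nat).
Local Notation expr := (expr R (d + d)).
Local Notation X := (sem (sqnorm_expr R d)).
Local Notation Y := (sem (sqdist_expr R d)).

Definition profile_expr (ka de la : R) : expr :=
  EMul (EExpinv 0 (affine ka (- (ka * de)) (sqdist_expr R d))) (affine la 1 (sqnorm_expr R d)).

Definition cutoff_expr (r2 r'2 : R) : expr :=
  let inner := EExpinv 0 (affine (-1) r'2 (sqnorm_expr R d)) in
  let outer := EExpinv 0 (affine 1 (- r2) (sqnorm_expr R d)) in
  EMul inner (EInv (EAdd inner outer)).

Definition bump_expr (ka de la r2 r'2 : R) : expr :=
  EMul (profile_expr ka de la) (cutoff_expr r2 r'2).

Lemma sem_bump ka de la r2 r'2 x : sem (bump_expr ka de la r2 r'2) x =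
  sem (profile_expr ka de la) x * sem (cutoff_expr r2 r'2) x.
Proof. by []. Qed.

Lemma denoms_nonzero_bump ka de la r2 r'2 :
  r2 < r'2 -> denoms_nonzero (bump_expr ka de la r2 r'2).
Proof.
move=> r2r'2; rewrite /= /affine /=; repeat split; move=> x.
rewrite mulN1r gt_eqF //.
have [xr'2|xr'2] := ltP (X x) r'2.
  by rewrite ltr_pwDl ?expinv_ge0 // expinv_gt0 // addrC subr_gt0.
by rewrite ltr_pwDr ?expinv_ge0 // expinv_gt0 // mul1r subr_gt0 (lt_le_trans r2r'2).
Qed.

Lemma sem_cutoff r2 r'2 x : sem (cutoff_expr r2 r'2) x =
  expinv 0 (r'2 - X x) / (expinv 0 (r'2 - X x) + expinv 0 (X x - r2)).
Proof. by rewrite /= mulN1r mul1r [- _ + _]addrC. Qed.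

Lemma sem_profile ka de la x :
  sem (profile_expr ka de la) x = expinv 0 (ka * (Y x - de)) * (la * X x + 1).
Proof. by rewrite /= mulrBr. Qed.

Lemma cutoff_inner r2 r'2 x : r2 < r'2 -> X x < r2 -> sem (cutoff_expr r2 r'2) x = 1.
Proof.
move=> r2r'2 xr2; rewrite sem_cutoff [expinv 0 (X x - r2)]expinv_le0 ?addr0 ?divff //.
  by rewrite gt_eqF // expinv_gt0 // subr_gt0 (lt_trans xr2).
by rewrite subr_le0 ltW.
Qed.

Lemma cutoff_outer r2 r'2 x : r'2 < X x -> sem (cutoff_expr r2 r'2) x = 0.
Proof. by move=> xr'2; rewrite sem_cutoff expinv_le0 ?mul0r // subr_le0 ltW. Qed.

Lemma profile_near_diag ka de la x : 0 < ka -> Y x < de -> sem (profile_expr ka de la) x = 0.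
Proof.
move=> ka0 xde; rewrite sem_profile expinv_le0 ?mul0r //.
by rewrite pmulr_rle0 // subr_le0 ltW.
Qed.

Lemma hessian_profile_ge ka de la x :
  0 < ka -> 0 < la -> 4 * la * X x <= 1 / 2 -> ka * (Y x - de) <= 1 / 4 ->
  psd_ge (hessian (sem (profile_expr ka de la)) x)
         (la * expinv 0 (ka * (Y x - de)))%:M.
Proof.
move=> ka0 la0 laX tle; rewrite sem_sqnorm in laX; apply: psd_ge_scalar => w.
rewrite hessian_qform; last by rewrite /= /affine /=; repeat split.
rewrite sem_dexpr2_expinv_mul !sem_affine !sem_dexpr_affine !sem_dexpr2_affine.
rewrite !sem_dexpr2_quad sem_dexpr_sqnorm !sem_sqnorm -mulrBr.
apply: (@expinv_profile_estimate _ _ _ _ _ _ ((x *m x^T) 0 0)) => //.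
- exact: ltW.
- by rewrite lerDr mulr_ge0 ?sqnorm_ge0 // ltW.
- by rewrite sem_sqdist sqnorm_ge0.
- exact: sqnorm_ge0.
- by rewrite mulrC; exact: cauchy_schwarz_rV.
Qed.

End Bump.

Section Construction.
Variables (R : realType) (d : nat) (r2 de : R).
Hypotheses (r2_gt2 : 2 < r2) (de_gt0 : 0 < de).
Local Notation V := 'rV[R]_(d + d).
Local Notation X := (sem (sqnorm_expr R d)).
Local Notation Y := (sem (sqdist_expr R d)).
(* With ka = la = 1 / (8 r2), the ball X < r2 gives 4 la X <= 1/2 and T <= 2 ka X <= 1/4. *)
Local Notation ka := (8 * r2)^-1.
Local Notation F := (sem (bump_expr d ka de ka r2 (r2 + 1))).

Let r2_gt0 : 0 < r2. Proof. by rewrite (lt_trans _ r2_gt2). Qed.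
Let ka_gt0 : 0 < ka. Proof. by rewrite invr_gt0 mulr_gt0. Qed.

Let continuous_X : continuous X. Proof. exact: continuous_sem. Qed.
Let continuous_Y : continuous Y. Proof. exact: continuous_sem. Qed.

Let wf_bump : denoms_nonzero (bump_expr d ka de ka r2 (r2 + 1)).
Proof. by apply: denoms_nonzero_bump; lra. Qed.

Lemma bump_smooth : smooth F.
Proof. exact: smooth_sem wf_bump. Qed.

Lemma bump_compact_support : compact_support F.
Proof.
exists (Num.sqrt (r2 + 1)) => x; rewrite enorm_sqnorm => Xx.
rewrite sem_bump cutoff_outer ?mulr0 //.
have X0 : 0 < X x by rewrite -sqrtr_gt0 (le_lt_trans _ Xx) ?sqrtr_ge0.
by move: Xx; rewrite ltr_sqrt.
Qed.

Lemma bump_vanishes_near_diag :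
  exists U : set V, [/\ open U, Dset d 0 `<=` U & forall x, U x -> F x = 0].
Proof.
exists [set x | Y x < de]; split; first exact: open_sublevel.
  move=> x; rewrite /Dset /= enorm_sqdist => Y0.
  have : Num.sqrt (Y x) == 0 by rewrite eq_le Y0 sqrtr_ge0.
  by rewrite sqrtr_eq0 => /le_lt_trans; apply.
by move=> x xde; rewrite sem_bump profile_near_diag ?mul0r.
Qed.

Lemma hessian_bump_inner x : X x < r2 ->
  psd_ge (hessian F x) (ka * expinv 0 (ka * (Y x - de)))%:M.
Proof.
move=> xr2; have r2n0 : r2 != 0 by rewrite gt_eqF.
have X0 : 0 <= X x by rewrite sem_sqnorm sqnorm_ge0.
have Xr2 : X x / r2 <= 1 by rewrite ler_pdivrMr ?mul1r ?ltW.
rewrite (@hessian_local _ _ _ (sem (profile_expr d ka de ka)) [set y | X y < r2]) //.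
- apply: hessian_profile_ge => //.
    by rewrite (_ : 4 * ka * X x = X x / r2 / 2); [lra | field].
  have YX := sqdist_le x.
  have : ka * (Y x - de) <= ka * (2 * X x) by rewrite ler_pM2l //; move: de_gt0; lra.
  by rewrite (_ : ka * (2 * X x) = X x / r2 / 4); [lra | field].
- exact: open_sublevel.
- by move=> y /set_mem yr2; rewrite sem_bump cutoff_inner ?mulr1 //; lra.
Qed.

Lemma hessian_bump_flat x : Y x < de \/ r2 + 1 < X x -> hessian F x = 0.
Proof.
rewrite -(hessian_cst0 x) => -[xde|xout].
  apply: (hessian_local (open_sublevel de continuous_Y)) => // y /set_mem yde.
  by rewrite sem_bump profile_near_diag ?mul0r.
apply: (hessian_local (open_superlevel (r2 + 1) continuous_X)) => // y /set_mem yout.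
by rewrite sem_bump cutoff_outer ?mulr0.
Qed.

Lemma hessian_bump_bounded :
  exists2 c, 0 < c & forall x, X x <= r2 + 1 -> psd_ge (hessian F x) (- c)%:M.
Proof.
have cH i j : continuous (fun x => hessian F x i j).
  have -> : (fun x => hessian F x i j) = sem (dexprs [:: i; j] (bump_expr d ka de ka r2 (r2 + 1))).
    by apply/funext => x; rewrite mxE pderivs_sem.
  exact/continuous_sem/denoms_nonzero_dexprs.
pose S x := \sum_i \sum_j `|hessian F x i j|.
have cS : continuous S.
  apply: continuous_sum => i; apply: continuous_sum => j x.
  by apply: continuous_comp; [exact: cH | exact: norm_continuous].
have [L SL] := continuous_bounded_closed_ball (r2 + 1) cS.
exists (`|L| * (d + d)%:R + 1) => [|x xr2].
  by rewrite ltr_pwDr // mulr_ge0.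
apply: (psd_ge_scalarW (a := - (L * (d + d)%:R))).
  rewrite lerN2; apply: le_trans (_ : `|L| * (d + d)%:R <= _); last by rewrite lerDl.
  by rewrite ler_wpM2r ?ler_norm.
apply: psd_ge_entry_bound => i j.
have SxL : `|S x| <= L by apply: SL; rewrite -sem_sqnorm.
apply: le_trans (le_trans (ler_norm _) SxL).
rewrite /S (bigD1 i) //= (bigD1 j) //= -addrA lerDl.
by rewrite addr_ge0 //; do ?[apply: sumr_ge0 => ? _].
Qed.

Lemma hessian_bump_ge (K : set V) : (forall x, K x -> X x < r2 /\ 2 * de <= Y x) ->
  exists c1 c2, [/\ 0 < c1, 0 < c2 & forall x, psd_ge (hessian F x)
    (c1 * indic K x
     - c2 * indic (Cann d (Num.sqrt r2) (Num.sqrt (r2 + 1)) `\` Dset d (Num.sqrt de / 2)) x)%:M].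
Proof.
move=> KXY; have [c2 c2_gt0 bounded] := hessian_bump_bounded.
exists (ka * expinv 0 (ka * de)), c2; split=> // [|x].
  by rewrite mulr_gt0 ?expinv_gt0 ?mulr_gt0.
set A := _ `\` _; rewrite !indicE.
have X0 : 0 <= X x by rewrite sem_sqnorm sqnorm_ge0.
have [xr2|r2x] := ltP (X x) r2.
  have /negbTE -> : x \notin A.
    apply/negP => /set_mem [/andP [+ _] _].
    by rewrite enorm_sqnorm ler_sqrt // leNgt xr2.
  rewrite mulr0 subr0; apply: psd_ge_scalarW (hessian_bump_inner xr2).
  have [/set_mem xK|_] := boolP (x \in K); last first.
    by rewrite mulr0 mulr_ge0 ?expinv_ge0 // ltW.
  rewrite mulr1 ler_pM2l // ler_expinv0 ?mulr_gt0 // ler_pM2l //.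
  by have [_] := KXY x xK; move: de_gt0; lra.
have /negbTE -> : x \notin K by apply/negP => /set_mem /KXY []; rewrite ltNge r2x.
rewrite mulr0 sub0r.
have [xde|dex] := ltP (Y x) de.
  by rewrite hessian_bump_flat; [apply: psd_ge0_scalar; rewrite oppr_le0 mulr_ge0 // ltW | left].
have [xout|xin] := ltP (r2 + 1) (X x).
  by rewrite hessian_bump_flat; [apply: psd_ge0_scalar; rewrite oppr_le0 mulr_ge0 // ltW | right].
have /set_mem inA : x \in A.
  have r2p : 0 <= r2 + 1 by rewrite addr_ge0 // ltW.
  apply/mem_set; split; first by rewrite /Cann /= enorm_sqnorm !ler_sqrt // r2x xin.
  rewrite /Dset /= enorm_sqdist => Ysmall.
  have : Num.sqrt de <= Num.sqrt (Y x) by rewrite ler_sqrt // (le_trans (ltW de_gt0)).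
  by move: Ysmall; have := sqrtr_gt0 de; rewrite de_gt0 /=; lra.
by rewrite (mem_set inA) mulr1; exact: bounded.
Qed.

End Construction.

Theorem lemma5p3 (R : realType) (d : nat) (K : set 'rV[R]_(d + d)) :
  compact K -> K `<=` ~` Dset d 0 ->
  exists (r r' c1 c2 eps : R) (F : 'rV[R]_(d + d) -> R),
    [/\ Num.sqrt 2 < r, r < r', 0 < c1, 0 < c2 & 0 < eps] /\
    smooth F /\ compact_support F /\
    (exists U : set 'rV[R]_(d + d),
        open U /\ Dset d 0 `<=` U /\ (forall x, U x -> F x = 0)) /\
    (forall x : 'rV[R]_(d + d),
        psd_ge (hessian F x)
          ((c1 * indic K x - c2 * indic (Cann d r r' `\` Dset d eps) x)%:M)).
Proof.
move=> cK KD.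
have [M KM] := compact_bounded_above cK (@continuous_sem _ _ (sqnorm_expr R d) I).
have Y_gt0 x : K x -> 0 < sem (sqdist_expr R d) x.
  by move=> /KD; rewrite /Dset /= enorm_sqdist => /negP; rewrite -ltNge sqrtr_gt0.
have [m m_gt0 Km] := compact_pos_bounded_below cK (@continuous_sem _ _ (sqdist_expr R d) I) Y_gt0.
pose r2 := `|M| + 3; pose de := m / 2.
have r2_gt2 : 2 < r2 by rewrite /r2; have := normr_ge0 M; lra.
have de_gt0 : 0 < de by rewrite divr_gt0.
have KXY x : K x -> sem (sqnorm_expr R d) x < r2 /\ 2 * de <= sem (sqdist_expr R d) x.
  move=> Kx; split; last by rewrite /de; have := Km x Kx; lra.
  by rewrite /r2; have := KM x Kx; have := ler_norm M; lra.
have [c1 [c2 [c1_gt0 c2_gt0 hess]]] := hessian_bump_ge r2_gt2 de_gt0 KXY.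
have [U [oU DU FU]] := bump_vanishes_near_diag d r2_gt2 de_gt0.
exists (Num.sqrt r2), (Num.sqrt (r2 + 1)), c1, c2, (Num.sqrt de / 2).
exists (sem (bump_expr d (8 * r2)^-1 de (8 * r2)^-1 r2 (r2 + 1))).
split; first split => //.
- by rewrite ltr_sqrt; lra.
- by rewrite ltr_sqrt; lra.
- by rewrite divr_gt0 ?sqrtr_gt0.
split; first exact: bump_smooth.
by split; [exact: bump_compact_support | split; [exists U | exact: hess]].
Qed.
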